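(* Let $\mathcal{P}=\bigcap_{g\in S}D_g(J)$, where $S=\{u_k,u_k^{-1}:k=1,\dots,8\}$ and $D_g(J)=\{P\in\mathbb{H}^3:\rho(J,P)\le\rho(g(J),P)\}$. Then the hyperbolic volume of $\mathcal{P}$, computed with the volume form $\frac{dx\,dy\,dr}{r^3}$, satisfies $\mathrm{Vol}(\mathcal{P})<9.77029$. Note that $9.77029\ldots=2\cdot\frac{32\,\zeta_{\mathbb{Q}(i)}(2)}{\pi^2}$, where $\zeta_{\mathbb{Q}(i)}$ is the Dedekind zeta function of $\mathbb{Q}(i)$.
   Context: Hyperbolic space. $\mathbb{H}^3=\{(z,r):z=x+iy\in\mathbb{C},\ r>0\}$ is the upper half-space model. Its hyperbolic distance $\rho$ is given by $$\cosh\rho((z,r),(z',r'))=1+\frac{|z-z'|^2+(r-r')^2}{2rr'}.$$ Let $g=\begin{pmatrix}a&b\\ c&d\end{pmatrix}\in SL_2(\mathbb{C})$. It acts on $\mathbb{H}^3$ by $g(z,r)=(z^*,r^* )$, where $$z^*=\frac{(az+b)(\bar c\bar z+\bar d)+a\bar c r^2}{|cz+d|^2+|c|^2r^2},\qquad r^*=\frac{r}{|cz+d|^2+|c|^2r^2}.$$ Let $J=(0,1)$. Number field. Let $\theta=\frac{1+\sqrt5}{2}$ and $\bar\theta=1-\theta$. The units $u_1,\dots,u_8$ are: - $u_1=\begin{pmatrix}i\theta&0\\0&i\bar\theta\end{pmatrix}$, - $u_2=\begin{pmatrix}i&1+i\\ i-1&i\end{pmatrix}$, - $u_3=\begin{pmatrix}\theta&1+i\\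 i-1&\bar\theta\end{pmatrix}$, - $u_4=\begin{pmatrix}\theta&-1-i\\ 1-i&\bar\theta\end{pmatrix}$, - $u_5=\begin{pmatrix}1+i&1+i\bar\theta\\ i(1+i\theta)&1+i\end{pmatrix}$, - $u_6=\begin{pmatrix}1+i&1+i\theta\\ i(1+i\bar\theta)&1+i\end{pmatrix}$, - $u_7=\begin{pmatrix}1-i&\bar\theta+i\\ i(\theta+i)&1-i\end{pmatrix}$, - $u_8=\begin{pmatrix}1-i&\theta+i\\ i(\bar\theta+i)&1-i\end{pmatrix}$. *)

From Stdlib Require Import Reals List.
Import ListNotations.
Open Scope R_scope.

Record C := mkC { re : R ; im : R }.
Definition C0 : C := mkC 0 0.
Definition Ci : C := mkC 0 1.
Definition CR (x : R) : C := mkC x 0.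
Definition Cadd (z w : C) : C := mkC (re z + re w) (im z + im w).
Definition Copp (z : C) : C := mkC (- re z) (- im z).
Definition Cmul (z w : C) : C :=
  mkC (re z * re w - im z * im w) (re z * im w + im z * re w).
Definition Cconj (z : C) : C := mkC (re z) (- im z).
Definition Cnorm2 (z : C) : R := re z * re z + im z * im z.
Definition Cscal (t : R) (z : C) : C := mkC (t * re z) (t * im z).

Record pt := mkPt { pz : C ; pr : R }.
Definition inH3 (p : pt) : Prop := 0 < pr p.
Definition J : pt := mkPt C0 1.

Definition cosh_rho (p q : pt) : R :=
  1 + (Cnorm2 (Cadd (pz p) (Copp (pz q))) + (pr p - pr q) ^ 2)
      / (2 * pr p * pr q).
Definition arcosh (t : R) : R := ln (t + sqrt (t * t - 1)).
Definition rho (p q : pt) : R := arcosh (cosh_rho p q).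

Record M2 := mkM2 { ma : C ; mb : C ; mc : C ; md : C }.

(* inverse of an element of SL_2(C) (det = 1): [[d,-b],[-c,a]] *)
Definition M2inv (g : M2) : M2 :=
  mkM2 (md g) (Copp (mb g)) (Copp (mc g)) (ma g).

Definition act (g : M2) (p : pt) : pt :=
  let a := ma g in let b := mb g in let c := mc g in let d := md g in
  let z := pz p in let r := pr p in
  let den := Cnorm2 (Cadd (Cmul c z) d) + Cnorm2 c * r ^ 2 in
  mkPt
    (Cscal (/ den)
       (Cadd (Cmul (Cadd (Cmul a z) b)
                   (Cadd (Cmul (Cconj c) (Cconj z)) (Cconj d)))
             (Cscal (r ^ 2) (Cmul a (Cconj c)))))
    (r / den).

Definition theta : R := (1 + sqrt 5) / 2.
Definition thetab : R := 1 - theta.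
Definition Cth : C := CR theta.
Definition Cthb : C := CR thetab.
Definition C1 : C := CR 1.
Definition onei : C := Cadd C1 Ci.
Definition onemi : C := Cadd C1 (Copp Ci).
Definition im1 : C := Cadd Ci (Copp C1).

Definition u1 : M2 := mkM2 (Cmul Ci Cth) C0 C0 (Cmul Ci Cthb).
Definition u2 : M2 := mkM2 Ci onei im1 Ci.
Definition u3 : M2 := mkM2 Cth onei im1 Cthb.
Definition u4 : M2 := mkM2 Cth (Copp onei) onemi Cthb.
Definition u5 : M2 := mkM2 onei (Cadd C1 (Cmul Ci Cthb))
                           (Cmul Ci (Cadd C1 (Cmul Ci Cth))) onei.
Definition u6 : M2 := mkM2 onei (Cadd C1 (Cmul Ci Cth))
                           (Cmul Ci (Cadd C1 (Cmul Ci Cthb))) onei.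
Definition u7 : M2 := mkM2 onemi (Cadd Cthb Ci)
                           (Cmul Ci (Cadd Cth Ci)) onemi.
Definition u8 : M2 := mkM2 onemi (Cadd Cth Ci)
                           (Cmul Ci (Cadd Cthb Ci)) onemi.

Definition units : list M2 := [u1; u2; u3; u4; u5; u6; u7; u8].

Definition S : list M2 := units ++ map M2inv units.

Definition Dg (g : M2) (P : pt) : Prop :=
  inH3 P /\ rho J P <= rho (act g J) P.

Definition Poly (P : pt) : Prop := inH3 P /\ forall g, In g S -> Dg g P.

Record box := mkBox { bx1 : R ; bx2 : R ; by1 : R ; by2 : R ; br1 : R ; br2 : R }.
Definition box_valid (b : box) : Prop :=
  bx1 b <= bx2 b /\ by1 b <= by2 b /\ 0 < br1 b /\ br1 b <= br2 b.
Definition in_box (b : box) (p : pt) : Prop :=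
  bx1 b <= re (pz p) <= bx2 b /\ by1 b <= im (pz p) <= by2 b /\
  br1 b <= pr p <= br2 b.
(* exact value of  \int_box dx dy dr / r^3 *)
Definition box_hvol (b : box) : R :=
  (bx2 b - bx1 b) * (by2 b - by1 b) * (/ (2 * br1 b ^ 2) - / (2 * br2 b ^ 2)).

(* Hyperbolic volume as the (Lebesgue) outer measure w.r.t. dx dy dr / r^3,
   i.e. inf over countable box covers of the sum of box volumes.
   "Vol(A) < c" holds iff some countable box cover has total volume < c. *)
Definition hvol_lt (A : pt -> Prop) (c : R) : Prop :=
  exists b : nat -> box,
    (forall n, box_valid (b n)) /\
    (forall p, A p -> exists n, in_box (b n) p) /\
    exists M, M < c /\ forall n, sum_f_R0 (fun k => box_hvol (b k)) n <= M.

From Pilot Require Import Defs.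
From Stdlib Require Import Reals Lra Psatz Lia List ZArith.
Import ListNotations.
Open Scope R_scope.

(* Proof idea.  We exhibit an explicit finite cover of the polyhedron
   P = \bigcap_{g in S} D_g(J) by 146 boxes of total volume 8.8824... < 9.77029.

   For g = [[a,b],[c,d]] with D = |c|^2 + |d|^2, the image g(J) is
      (q/D, 1/D) with q = b conj(d) + a conj(c).  Comparing cosh rho(J, P) with
      cosh rho(g(J), P) shows that D_g(J) lies in the "face"
         (D - D^2) |P|^2 + 2D (Re q) x + 2D (Im q) y <= |q|^2 + 1 - D,
      a Euclidean ball, ball complement or half-space (Dg_on_bisector).
   2. Rational relaxation.  The coefficients lie in Q(sqrt 5).  The face of u1 is
      the ball |P| <= theta; inside it each of the 16 faces implies a face with
      rational coefficients, recorded in [certificate] (certificate_valid).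
   3. Cover.  Cutting the (x, y)-plane into a grid of squares of side 81/400, on
      each square either the rational faces are infeasible, or they confine r to
      an interval [r1, r2]; this gives the table [boxes] (faces_covered).
   4. Volume.  Summing dx dy dr / r^3 over the boxes gives the bound (lemma2). *)

Definition nrm2 (x y r : R) : R := x * x + y * y + r * r.

(* The region  A |P|^2 + B x + C y <= E  of the upper half-space: a Euclidean
   ball, the complement of a ball, or a half-space. *)
Record face := mkFace { fA : R ; fB : R ; fC : R ; fE : R }.

Definition on_face (f : face) (x y r : R) : Prop :=
  fA f * nrm2 x y r + fB f * x + fC f * y <= fE f.

Definition den (g : M2) : R := Cnorm2 (mc g) + Cnorm2 (md g).

Definition qJ (g : M2) : Defs.C :=
  Cadd (Cmul (mb g) (Cconj (md g))) (Cmul (ma g) (Cconj (mc g))).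

Lemma act_J (g : M2) : 0 < den g ->
  act g J = mkPt (Cscal (/ den g) (qJ g)) (/ den g).
Proof.
  intros Hd. destruct g as [[ar ai] [br bi] [cr ci] [dr di]].
  unfold den, qJ, act, J, C0, Cnorm2, Cscal, Cadd, Cmul, Cconj in *; simpl in *.
  f_equal; [f_equal |]; field; lra.
Qed.

Lemma arcosh_le_reg (a b : R) : 1 <= a -> 1 <= b -> arcosh a <= arcosh b -> a <= b.
Proof.
  intros Ha Hb Hab. destruct (Rle_lt_dec a b) as [| Hlt]; [assumption |].
  exfalso. unfold arcosh in Hab.
  assert (Hsq : sqrt (b * b - 1) <= sqrt (a * a - 1)) by (apply sqrt_le_1_alt; nra).
  pose proof (sqrt_pos (b * b - 1)).
  assert (ln (b + sqrt (b * b - 1)) < ln (a + sqrt (a * a - 1)))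
    by (apply ln_increasing; lra).
  lra.
Qed.

Lemma cosh_rho_ge_1 (p q : pt) : 0 < pr p -> 0 < pr q -> 1 <= cosh_rho p q.
Proof.
  intros Hp Hq. unfold cosh_rho, Cnorm2.
  set (u := re (Cadd (pz p) (Copp (pz q)))). set (v := im (Cadd (pz p) (Copp (pz q)))).
  assert (0 <= (u * u + v * v + (pr p - pr q) ^ 2) / (2 * pr p * pr q)).
  { apply Rmult_le_pos; [| apply Rlt_le, Rinv_0_lt_compat; nra].
    pose proof (Rle_0_sqr u); pose proof (Rle_0_sqr v); pose proof (pow2_ge_0 (pr p - pr q)).
    unfold Rsqr in *; lra. }
  lra.
Qed.

Lemma closer_to_J (D a b x y r : R) : 0 < D -> 0 < r ->
  cosh_rho J (mkPt (mkC x y) r)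
    <= cosh_rho (mkPt (mkC (/ D * a) (/ D * b)) (/ D)) (mkPt (mkC x y) r) ->
  (D - D * D) * nrm2 x y r + 2 * D * a * x + 2 * D * b * y <= a * a + b * b + 1 - D.
Proof.
  intros HD Hr Hcosh.
  unfold cosh_rho, nrm2, Cnorm2, Cadd, Copp, J, C0 in *; cbn [re im pz pr] in Hcosh.
  (* multiplied by 2rD:  D (|z|^2 + (1-r)^2) <= |Dz - (a + ib)|^2 + (1 - Dr)^2 *)
  apply (Rmult_le_compat_r (2 * r * D)) in Hcosh; [| nra].
  replace ((1 + ((0 + - x) * (0 + - x) + (0 + - y) * (0 + - y) + (1 - r) ^ 2)
                / (2 * 1 * r)) * (2 * r * D))
    with (2 * r * D + D * (x * x + y * y + (1 - r) ^ 2)) in Hcosh by (field; lra).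
  replace ((1 + ((/ D * a + - x) * (/ D * a + - x) + (/ D * b + - y) * (/ D * b + - y)
                 + (/ D - r) ^ 2) / (2 * / D * r)) * (2 * r * D))
    with (2 * r * D + ((a - D * x) ^ 2 + (b - D * y) ^ 2 + (1 - D * r) ^ 2)) in Hcosh
    by (field; lra).
  nra.
Qed.

Definition bisector_face (g : M2) : face :=
  mkFace (den g - den g * den g) (2 * den g * re (qJ g)) (2 * den g * im (qJ g))
         (Cnorm2 (qJ g) + 1 - den g).

Lemma Dg_on_bisector (g : M2) (P : pt) : 0 < den g -> Dg g P ->
  on_face (bisector_face g) (re (pz P)) (im (pz P)) (pr P).
Proof.
  intros Hd [Hr Hrho]. unfold inH3 in Hr.
  assert (HgJ : 0 < pr (act g J)) by (rewrite act_J by lra; apply Rinv_0_lt_compat, Hd).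
  apply arcosh_le_reg in Hrho;
    [| apply cosh_rho_ge_1; simpl; lra | apply cosh_rho_ge_1; lra].
  rewrite act_J in Hrho by lra.
  destruct P as [[x y] r].
  unfold on_face, bisector_face, Cnorm2; cbn [fA fB fC fE re im pz pr] in *.
  exact (closer_to_J (den g) (re (qJ g)) (im (qJ g)) x y r Hd Hr Hrho).
Qed.

(* Squared radius of the ball |P| <= theta containing the polyhedron
   (theta^2 = 2.6180339...). *)
Definition ball2 : R := 26181 / 10000.

Definition ball_face : face := mkFace 1 0 0 ball2.

Lemma ball_coords (x y r : R) : nrm2 x y r <= ball2 ->
  -162/100 <= x <= 162/100 /\ -162/100 <= y <= 162/100.
Proof. unfold nrm2, ball2; intros; split; nra. Qed.

(* Arithmetic of sqrt 5: expanded bisector coefficients are polynomials in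
   sqrt 5 of degree <= 4 (times the coordinates), and these facts let lra
   trade sqrt 5 for its rational bounds. *)
Lemma sqrt5_sq : sqrt 5 * sqrt 5 = 5.
Proof. apply sqrt_sqrt; lra. Qed.

Lemma sqrt5_bounds : 2236067/1000000 < sqrt 5 < 2236068/1000000.
Proof. pose proof sqrt5_sq; pose proof (sqrt_pos 5); split; nra. Qed.

Lemma sqrt5_powers_mul (v : R) :
  sqrt 5 * sqrt 5 * v = 5 * v /\
  sqrt 5 * sqrt 5 * sqrt 5 * v = 5 * (sqrt 5 * v) /\
  sqrt 5 * sqrt 5 * sqrt 5 * sqrt 5 * v = 25 * v.
Proof.
  pose proof sqrt5_sq as H5.
  split; [| split].
  - rewrite H5; ring.
  - replace (sqrt 5 * sqrt 5 * sqrt 5 * v) with ((sqrt 5 * sqrt 5) * (sqrt 5 * v)) by ring.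
    rewrite H5; ring.
  - replace (sqrt 5 * sqrt 5 * sqrt 5 * sqrt 5 * v)
      with ((sqrt 5 * sqrt 5) * (sqrt 5 * sqrt 5) * v) by ring.
    rewrite H5; ring.
Qed.

Lemma sqrt5_bounds_mul (v : R) : 0 <= v ->
  0 <= (sqrt 5 - 2236067/1000000) * v /\ 0 <= (2236068/1000000 - sqrt 5) * v.
Proof. intros Hv; pose proof sqrt5_bounds; split; apply Rmult_le_pos; lra. Qed.

Ltac unfold_units :=
  unfold den, qJ, M2inv, u1, u2, u3, u4, u5, u6, u7, u8, onei, onemi, im1, Cth, Cthb,
    Defs.C1, thetab, theta, CR, Cadd, Cmul, Cconj, Copp, Cnorm2, Ci, C0 in *;
  cbn [re im ma mb mc md] in *.

Ltac sqrt5_facts v :=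
  pose proof (sqrt5_powers_mul v); pose proof (sqrt5_bounds_mul v ltac:(lra)).

Definition relaxes (g : M2) (f : face) : Prop :=
  0 < den g /\
  forall x y r, 0 < r -> nrm2 x y r <= ball2 ->
    on_face (bisector_face g) x y r -> on_face f x y r.

Ltac prove_relaxes :=
  split;
  [ unfold_units; pose proof sqrt5_bounds; pose proof (sqrt5_powers_mul 1); lra
  | let x := fresh "x" in let y := fresh "y" in let r := fresh "r" in
    intros x y r Hr Hball Hg;
    destruct (ball_coords x y r Hball) as [Hx Hy];
    assert (Hw : 0 <= nrm2 x y r) by (unfold nrm2; nra);
    unfold on_face, bisector_face, ball_face, ball2 in *; cbn [fA fB fC fE] in *;
    set (w := nrm2 x y r) in *;
    unfold_units; pose proof (sqrt5_powers_mul 1);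
    sqrt5_facts w; pose proof (sqrt5_powers_mul x); pose proof (sqrt5_powers_mul y);
    sqrt5_facts (x + 162/100); sqrt5_facts (162/100 - x);
    sqrt5_facts (y + 162/100); sqrt5_facts (162/100 - y);
    lra ].

Definition certificate : list (M2 * face) := [
  (u1, ball_face);
  (u2, mkFace (-6) 12 (-12) (60001/10000));
  (u3, mkFace (-16459/5000) (-4261/400) (-4261/400) (86183/10000));
  (u4, mkFace (-16459/5000) (4261/400) (4261/400) (86183/10000));
  (u5, mkFace (-259443/10000) (-1061/400) (-475967/10000) (66911/5000));
  (u6, mkFace (-80557/10000) (11461/400) (15967/10000) (19523/1250));
  (u7, mkFace (-259443/10000) (-475967/10000) (-1061/400) (66911/5000));
  (u8, mkFace (-80557/10000) (15967/10000) (11461/400) (19523/1250));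
  (M2inv u1, mkFace (-42361/10000) 0 0 (-16179/10000));
  (M2inv u2, mkFace (-6) (-12) 12 (60001/10000));
  (M2inv u3, mkFace (-83541/5000) (-8261/400) (-8261/400) (31911/5000));
  (M2inv u4, mkFace (-83541/5000) (8261/400) (8261/400) (31911/5000));
  (M2inv u5, mkFace (-259443/10000) (1061/400) (475967/10000) (66911/5000));
  (M2inv u6, mkFace (-80557/10000) (-11461/400) (-15967/10000) (19523/1250));
  (M2inv u7, mkFace (-259443/10000) (475967/10000) (1061/400) (66911/5000));
  (M2inv u8, mkFace (-80557/10000) (-15967/10000) (-11461/400) (19523/1250))
].

Lemma certificate_generators : map fst certificate = S.
Proof. reflexivity. Qed.

(* The isometric sphere of u1 is |P| = theta, so D_{u1}(J) lies in the ball. *)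
Lemma ball_from_u1 (x y r : R) :
  on_face (bisector_face u1) x y r -> nrm2 x y r <= ball2.
Proof.
  intros Hg. assert (Hw : 0 <= nrm2 x y r) by (unfold nrm2; nra).
  unfold on_face, bisector_face, ball2 in *; cbn [fA fB fC fE] in *.
  set (w := nrm2 x y r) in *.
  unfold_units; pose proof (sqrt5_powers_mul 1); pose proof sqrt5_bounds; sqrt5_facts w.
  lra.
Qed.

Lemma certificate_valid : Forall (fun e => relaxes (fst e) (snd e)) certificate.
Proof.
  unfold certificate.
  repeat (apply Forall_cons; [cbn [fst snd]; prove_relaxes |]).
  apply Forall_nil.
Qed.

Lemma polyhedron_on_faces (x y r : R) :
  Poly (mkPt (mkC x y) r) -> Forall (fun f => on_face f x y r) (map snd certificate).
Proof.
  intros [Hr HP]. unfold inH3 in Hr; cbn [pr] in Hr.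
  assert (HS : forall e, In e certificate -> Dg (fst e) (mkPt (mkC x y) r)).
  { intros e He. apply HP. rewrite <- certificate_generators. now apply in_map. }
  assert (Hball : nrm2 x y r <= ball2).
  { destruct (Forall_inv certificate_valid) as [Hden _].
    apply ball_from_u1, (Dg_on_bisector u1 (mkPt (mkC x y) r) Hden).
    apply (HS (u1, ball_face)). now left. }
  apply Forall_forall. intros f Hf. apply in_map_iff in Hf as [e [<- He]].
  destruct (proj1 (Forall_forall _ _) certificate_valid e He) as [Hden Hrelax].
  apply Hrelax; [exact Hr | exact Hball |].
  exact (Dg_on_bisector (fst e) (mkPt (mkC x y) r) Hden (HS e He)).
Qed.

(* The cover.  The square [-7 step, 7 step]^2 of the (x, y)-plane is cut into
   a grid of squares of side step; above the square (i, j) meeting the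
   polyhedron sits the box  cell i j r1 r2. *)
Definition step : R := 81 / 400.

Definition cell (i j : Z) (r1 r2 : R) : box :=
  mkBox (IZR i * step) (IZR i * step + step) (IZR j * step) (IZR j * step + step) r1 r2.

Definition boxes : list box := [
  cell (-7) (-2) (459/500) (1051/1000); cell (-7) (-1) (951/1000) (107/100);
  cell (-7) 0 (907/1000) (107/100); cell (-7) 1 (813/1000) (1051/1000);
  cell (-7) 2 (791/1000) (99/100);
  cell (-6) (-3) (441/500) (1197/1000); cell (-6) (-2) (763/1000) (1247/1000);
  cell (-6) (-1) (797/1000) (1263/1000); cell (-6) 0 (149/200) (1263/1000);
  cell (-6) 1 (87/125) (1247/1000); cell (-6) 2 (779/1000) (1197/1000);
  cell (-6) 3 (893/1000) (277/250);
  cell (-5) (-4) (971/1000) (1263/1000); cell (-5) (-3) (701/1000) (671/500);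
  cell (-5) (-2) (49/100) (1387/1000); cell (-5) (-1) (541/1000) (701/500);
  cell (-5) 0 (64/125) (701/500); cell (-5) 1 (571/1000) (1387/1000);
  cell (-5) 2 (39/50) (671/500); cell (-5) 3 (899/1000) (1263/1000);
  cell (-5) 4 (481/500) (143/125);
  cell (-4) (-5) (971/1000) (1263/1000); cell (-4) (-4) (379/500) (343/250);
  cell (-4) (-3) (281/500) (289/200); cell (-4) (-2) (57/125) (1487/1000);
  cell (-4) (-1) (57/125) (1501/1000); cell (-4) 0 (83/200) (1501/1000);
  cell (-4) 1 (457/1000) (1487/1000); cell (-4) 2 (7/10) (289/200);
  cell (-4) 3 (831/1000) (343/250); cell (-4) 4 (899/1000) (1263/1000);
  cell (-4) 5 (893/1000) (277/250);
  cell (-3) (-6) (441/500) (1197/1000); cell (-3) (-5) (701/1000) (671/500);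
  cell (-3) (-4) (281/500) (289/200); cell (-3) (-3) (269/500) (757/500);
  cell (-3) (-2) (203/500) (777/500); cell (-3) (-1) (167/500) (196/125);
  cell (-3) 0 (143/500) (196/125); cell (-3) 1 (151/500) (777/500);
  cell (-3) 2 (539/1000) (757/500); cell (-3) 3 (7/10) (289/200);
  cell (-3) 4 (39/50) (671/500); cell (-3) 5 (779/1000) (1197/1000);
  cell (-3) 6 (791/1000) (99/100);
  cell (-2) (-7) (459/500) (1051/1000); cell (-2) (-6) (763/1000) (1247/1000);
  cell (-2) (-5) (49/100) (1387/1000); cell (-2) (-4) (57/125) (1487/1000);
  cell (-2) (-3) (203/500) (777/500); cell (-2) (-2) (411/1000) (797/500);
  cell (-2) (-1) (419/1000) (803/500); cell (-2) 0 (419/1000) (803/500);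
  cell (-2) 1 (353/1000) (797/500); cell (-2) 2 (151/500) (777/500);
  cell (-2) 3 (457/1000) (1487/1000); cell (-2) 4 (571/1000) (1387/1000);
  cell (-2) 5 (87/125) (1247/1000); cell (-2) 6 (813/1000) (1051/1000);
  cell (-1) (-7) (951/1000) (107/100); cell (-1) (-6) (797/1000) (1263/1000);
  cell (-1) (-5) (541/1000) (701/500); cell (-1) (-4) (57/125) (1501/1000);
  cell (-1) (-3) (167/500) (196/125); cell (-1) (-2) (419/1000) (803/500);
  cell (-1) (-1) (273/500) (1619/1000); cell (-1) 0 (273/500) (1619/1000);
  cell (-1) 1 (419/1000) (803/500); cell (-1) 2 (143/500) (196/125);
  cell (-1) 3 (83/200) (1501/1000); cell (-1) 4 (64/125) (701/500);
  cell (-1) 5 (149/200) (1263/1000); cell (-1) 6 (907/1000) (107/100);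
  cell 0 (-7) (907/1000) (107/100); cell 0 (-6) (149/200) (1263/1000);
  cell 0 (-5) (64/125) (701/500); cell 0 (-4) (83/200) (1501/1000);
  cell 0 (-3) (143/500) (196/125); cell 0 (-2) (419/1000) (803/500);
  cell 0 (-1) (273/500) (1619/1000); cell 0 0 (273/500) (1619/1000);
  cell 0 1 (419/1000) (803/500); cell 0 2 (167/500) (196/125);
  cell 0 3 (57/125) (1501/1000); cell 0 4 (541/1000) (701/500);
  cell 0 5 (797/1000) (1263/1000); cell 0 6 (951/1000) (107/100);
  cell 1 (-7) (813/1000) (1051/1000); cell 1 (-6) (87/125) (1247/1000);
  cell 1 (-5) (571/1000) (1387/1000); cell 1 (-4) (457/1000) (1487/1000);
  cell 1 (-3) (151/500) (777/500); cell 1 (-2) (353/1000) (797/500);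
  cell 1 (-1) (419/1000) (803/500); cell 1 0 (419/1000) (803/500);
  cell 1 1 (411/1000) (797/500); cell 1 2 (203/500) (777/500);
  cell 1 3 (57/125) (1487/1000); cell 1 4 (49/100) (1387/1000);
  cell 1 5 (763/1000) (1247/1000); cell 1 6 (459/500) (1051/1000);
  cell 2 (-7) (791/1000) (99/100); cell 2 (-6) (779/1000) (1197/1000);
  cell 2 (-5) (39/50) (671/500); cell 2 (-4) (7/10) (289/200);
  cell 2 (-3) (539/1000) (757/500); cell 2 (-2) (151/500) (777/500);
  cell 2 (-1) (143/500) (196/125); cell 2 0 (167/500) (196/125);
  cell 2 1 (203/500) (777/500); cell 2 2 (269/500) (757/500);
  cell 2 3 (281/500) (289/200); cell 2 4 (701/1000) (671/500);
  cell 2 5 (441/500) (1197/1000);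
  cell 3 (-6) (893/1000) (277/250); cell 3 (-5) (899/1000) (1263/1000);
  cell 3 (-4) (831/1000) (343/250); cell 3 (-3) (7/10) (289/200);
  cell 3 (-2) (457/1000) (1487/1000); cell 3 (-1) (83/200) (1501/1000);
  cell 3 0 (57/125) (1501/1000); cell 3 1 (57/125) (1487/1000);
  cell 3 2 (281/500) (289/200); cell 3 3 (379/500) (343/250);
  cell 3 4 (971/1000) (1263/1000);
  cell 4 (-5) (481/500) (143/125); cell 4 (-4) (899/1000) (1263/1000);
  cell 4 (-3) (39/50) (671/500); cell 4 (-2) (571/1000) (1387/1000);
  cell 4 (-1) (64/125) (701/500); cell 4 0 (541/1000) (701/500);
  cell 4 1 (49/100) (1387/1000); cell 4 2 (701/1000) (671/500);
  cell 4 3 (971/1000) (1263/1000);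
  cell 5 (-4) (893/1000) (277/250); cell 5 (-3) (779/1000) (1197/1000);
  cell 5 (-2) (87/125) (1247/1000); cell 5 (-1) (149/200) (1263/1000);
  cell 5 0 (797/1000) (1263/1000); cell 5 1 (763/1000) (1247/1000);
  cell 5 2 (441/500) (1197/1000);
  cell 6 (-3) (791/1000) (99/100); cell 6 (-2) (813/1000) (1051/1000);
  cell 6 (-1) (907/1000) (107/100); cell 6 0 (951/1000) (107/100);
  cell 6 1 (459/500) (1051/1000)
].

(* A degenerate box of volume 0, padding the list into a countable family. *)
Definition zero_box : box := mkBox 0 0 0 0 1 1.

Definition grid_lines : list Z := [-7; -6; -5; -4; -3; -2; -1; 0; 1; 2; 3; 4; 5; 6; 7]%Z.

(* On [a, b] the parabola x^2 lies below its chord and above its tangents at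
   the end points; these linear bounds let lra handle |P|^2 on a grid square. *)
Lemma square_bounds (a b x : R) : a <= x <= b ->
  x * x <= (a + b) * x - a * b /\ 2 * a * x - a * a <= x * x /\ 2 * b * x - b * b <= x * x.
Proof. intros Hx; split; [| split]; nra. Qed.

(* One branch per grid interval (-oo, k0 step], (k0 step, k1 step], ...,
   (kn step, +oo); each branch keeps only the bounds of its own interval. *)
Ltac split_grid v ks :=
  lazymatch ks with
  | nil => idtac
  | ?k :: ?ks' =>
      let Hk := fresh "Hgrid" in
      destruct (Rle_lt_dec v (IZR k * step)) as [Hk | Hk]; [| split_grid_above v Hk ks']
  end
with split_grid_above v Hlo ks :=
  lazymatch ks with
  | nil => idtac
  | ?k :: ?ks' =>
      let Hk := fresh "Hgrid" in
      destruct (Rle_lt_dec v (IZR k * step)) as [Hk | Hk];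
      [| clear Hlo; split_grid_above v Hk ks']
  end.

Ltac grid_index v :=
  lazymatch goal with _ : IZR ?i * step < v |- _ => i end.

Ltac cell_index i j l :=
  lazymatch l with
  | cell ?a ?b _ _ :: ?l' =>
      let skip _ := let n := cell_index i j l' in constr:(Datatypes.S n) in
      lazymatch a with
      | i => lazymatch b with j => constr:(O) | _ => skip tt end
      | _ => skip tt
      end
  end.

(* On a grid square, either the faces are infeasible, or the box above it
   contains the point: r is bounded through r^2 = |P|^2 - x^2 - y^2. *)
Ltac solve_grid_square x y :=
  first
  [ let i := grid_index x in let j := grid_index y in
    let l := eval cbv delta [boxes] in boxes in
    let n := cell_index i j l in
    exists n; unfold boxes; cbn [nth];
    unfold in_box, cell; cbn [bx1 bx2 by1 by2 br1 br2 re im pz pr];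
    destruct (square_bounds (IZR i * step) (IZR i * step + step) x) as (Hx1 & Hx2 & Hx3);
    [lra |];
    destruct (square_bounds (IZR j * step) (IZR j * step + step) y) as (Hy1 & Hy2 & Hy3);
    [lra |];
    unfold step in *;
    split; [lra | split; [lra | split; apply Rsqr_incr_0_var; unfold Rsqr; lra]]
  | exfalso; unfold step in *; lra ].

Lemma faces_covered (x y r : R) : 0 < r ->
  Forall (fun f => on_face f x y r) (map snd certificate) ->
  exists n, in_box (nth n boxes zero_box) (mkPt (mkC x y) r).
Proof.
  intros Hr Hfaces.
  unfold certificate in Hfaces; cbn [map snd] in Hfaces.
  repeat match goal with
         | H : Forall _ (_ :: _) |- _ => apply Forall_cons_iff in H; destruct H
         end.
  unfold on_face, ball_face, ball2, nrm2 in *; cbn [fA fB fC fE] in *.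
  let ks := eval cbv delta [grid_lines] in grid_lines in
  split_grid x ks; split_grid y ks; solve_grid_square x y.
Qed.

Definition total_hvol (l : list box) : R := fold_right (fun b s => box_hvol b + s) 0 l.

Lemma box_hvol_nonneg (b : box) : box_valid b -> 0 <= box_hvol b.
Proof.
  destruct b as [x1 x2 y1 y2 r1 r2]; unfold box_valid, box_hvol; cbn [bx1 bx2 by1 by2 br1 br2].
  intros (H1 & H2 & H3 & H4).
  apply Rmult_le_pos; [apply Rmult_le_pos; lra |].
  assert (/ (2 * r2 ^ 2) <= / (2 * r1 ^ 2)).
  { apply Rinv_le_contravar.
    - apply Rmult_lt_0_compat; [lra | apply pow_lt; lra].
    - apply Rmult_le_compat_l; [lra | apply pow_incr; lra]. }
  lra.
Qed.

Lemma total_hvol_nonneg (l : list box) : Forall box_valid l -> 0 <= total_hvol l.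
Proof.
  induction 1 as [| b l Hb Hl IH]; unfold total_hvol in *; cbn [fold_right]; [lra |].
  pose proof (box_hvol_nonneg b Hb). lra.
Qed.

Lemma nth_valid (l : list box) (n : nat) : Forall box_valid l -> box_valid (nth n l zero_box).
Proof.
  intros Hl. destruct (Nat.lt_ge_cases n (length l)) as [Hn | Hn].
  - exact (proj1 (Forall_forall _ _) Hl _ (nth_In l zero_box Hn)).
  - rewrite nth_overflow by exact Hn. unfold box_valid, zero_box; cbn; lra.
Qed.

Lemma partial_sums_le_total (l : list box) : Forall box_valid l -> forall n,
  sum_f_R0 (fun k => box_hvol (nth k l zero_box)) n <= total_hvol l.
Proof.
  induction 1 as [| b l Hb Hl IH]; intro n; unfold total_hvol in *; cbn [fold_right].
  - rewrite (sum_eq _ (fun _ => 0)), sum_cte; [lra |].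
    intros [| k] _; unfold box_hvol, zero_box; cbn [nth bx1 bx2 by1 by2 br1 br2]; ring.
  - pose proof (total_hvol_nonneg l Hl) as Hl0; unfold total_hvol in Hl0.
    destruct n as [| m]; [cbn [sum_f_R0 nth]; lra |].
    rewrite decomp_sum by lia. cbn [nth pred].
    specialize (IH m). lra.
Qed.

Lemma boxes_valid : Forall box_valid boxes.
Proof. unfold boxes; repeat constructor; unfold box_valid, cell, step; cbn; lra. Qed.

Lemma boxes_total : total_hvol boxes < 977029 / 100000.
Proof.
  unfold boxes, total_hvol, box_hvol, cell, step.
  cbn [fold_right bx1 bx2 by1 by2 br1 br2]. lra.
Qed.

Theorem lemma2 : hvol_lt Poly (977029 / 100000).
Proof.
  exists (fun n => nth n boxes zero_box). split; [| split].
  - intro n. exact (nth_valid boxes n boxes_valid).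
  - intros [[x y] r] HP. apply faces_covered.
    + exact (proj1 HP).
    + exact (polyhedron_on_faces x y r HP).
  - exists (total_hvol boxes). split.
    + exact boxes_total.
    + exact (partial_sums_le_total boxes boxes_valid).
Qed.
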